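(* Let $\mathcal{R}\colon\mathbf{Mod}_{\mathbb{R}_{\geq0}}\to\mathbf{Vect}_{\mathbb{R}}$ be a left adjoint to the forgetful functor $\mathbf{Vect}_{\mathbb{R}}\to\mathbf{Mod}_{\mathbb{R}_{\geq0}}$ (restriction of scalars along $\mathbb{R}_{\geq0}\hookrightarrow\mathbb{R}$), and let $\mathcal{C}\colon\mathbf{Vect}_{\mathbb{R}}\to\mathbf{Vect}_{\mathbb{C}}$ be a left adjoint to the forgetful functor $\mathbf{Vect}_{\mathbb{C}}\to\mathbf{Vect}_{\mathbb{R}}$ (restriction of scalars along $\mathbb{R}\hookrightarrow\mathbb{C}$). For a finite-dimensional complex Hilbert space $H$, the transpose under the first adjunction of the inclusion $\mathcal{Pos}(H)\hookrightarrow\mathcal{SA}(H)$ (a map in $\mathbf{Mod}_{\mathbb{R}_{\geq0}}$) is an isomorphism $\mathcal{R}(\mathcal{Pos}(H))\cong\mathcal{SA}(H)$ in $\mathbf{Vect}_{\mathbb{R}}$, and the transpose under the second adjunction of the inclusion $\mathcal{SA}(H)\hookrightarrow\mathcal{B}(H)$ (a map in $\mathbf{Vect}_{\mathbb{R}}$) is an isomorphism $\mathcal{C}(\mathcal{SA}(H))\cong\mathcal{B}(H)$ in $\mathbf{Vect}_{\mathbb{C}}$. Consequently $\mathcal{R}\circ\mathcal{Pos}\cong\mathcal{SA}$ and $\mathcal{C}\circ\mathcal{SA}\cong\mathcal{B}$ as functors on $\mathbf{FdHilb}$.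
   Context: For a finite-dimensional complex Hilbert space $H$: $\mathcal{B}(H)$ is the complex vector space of linear operators $H\to H$; $\mathcal{SA}(H)\subseteq\mathcal{B}(H)$ is the real vector space of self-adjoint operators ($A^\dagger=A$); $\mathcal{Pos}(H)\subseteq\mathcal{SA}(H)$ is the $\mathbb{R}_{\geq0}$-module of positive operators ($\langle Ax,x\rangle\ge0$ for all $x$). $\mathbf{FdHilb}$ is the category of finite-dimensional complex Hilbert spaces and linear maps, and $\mathcal{B},\mathcal{SA},\mathcal{Pos}$ are functors from it (to $\mathbf{Vect}_{\mathbb{C}}$, $\mathbf{Vect}_{\mathbb{R}}$, $\mathbf{Mod}_{\mathbb{R}_{\ge0}}$ respectively) sending $C\colon H\to K$ to $A\mapsto CAC^{\dagger}$. $\mathbf{Mod}_{\mathbb{R}_{\geq0}}$ is the category of modules over the semiring $\mathbb{R}_{\geq0}$ (commutative monoids with a scalar multiplication by non-negative reals that is additive in each argument, unital and associative) with linear maps; $\mathbf{Vect}_{\mathbb{R}}$, $\mathbf{Vect}_{\mathbb{C}}$ are the categories of real, resp. complex, vector spaces. *)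

From HB Require Import structures.
From mathcomp Require Import all_boot all_order all_algebra.
From mathcomp Require Import reals.
From mathcomp Require Import complex.
Set Implicit Arguments. Unset Strict Implicit. Unset Printing Implicit Defensive.
Import Order.TTheory GRing.Theory Num.Theory.
Local Open Scope ring_scope.

Section Defs.
Variable R : realType.
Local Notation C := R[i].

Local Notation rC := (real_complex R).

(** conjugate transpose (Hilbert-space adjoint for the standard inner product on C^n) *)
Definition adjmx m n (A : 'M[C]_(m, n)) : 'M[C]_(n, m) := (map_mx Num.conj A)^T.

Definition hermitian n (A : 'M[C]_n) : bool := adjmx A == A.

Definition posmx n (A : 'M[C]_n) : Prop :=
  forall x : 'cV[C]_n, 0 <= (adjmx x *m A *m x) 0 0.

Lemma adjmxD m n (A B : 'M[C]_(m, n)) : adjmx (A + B) = adjmx A + adjmx B.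
Proof. by rewrite /adjmx map_mxD linearD. Qed.
Lemma adjmxN m n (A : 'M[C]_(m, n)) : adjmx (- A) = - adjmx A.
Proof. by rewrite /adjmx map_mxN linearN. Qed.
Lemma adjmx0 m n : adjmx (0 : 'M[C]_(m, n)) = 0.
Proof. by rewrite /adjmx map_mx0 linear0. Qed.
Lemma conj_rC (r : R) : Num.conj (rC r) = rC r.
Proof. exact: conjc_real. Qed.
Lemma adjmxZr m n r (A : 'M[C]_(m, n)) : adjmx (rC r *: A) = rC r *: adjmx A.
Proof.
by apply/matrixP=> i j; rewrite /adjmx !mxE rmorphM /= conj_rC.
Qed.
Lemma adjmxK m n (A : 'M[C]_(m, n)) : adjmx (adjmx A) = A.
Proof. by apply/matrixP=> i j; rewrite /adjmx !mxE conjCK. Qed.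
Lemma adjmxM m n p (A : 'M[C]_(m, n)) (B : 'M[C]_(n, p)) :
  adjmx (A *m B) = adjmx B *m adjmx A.
Proof. by rewrite /adjmx map_mxM trmx_mul. Qed.

(** The real vector space SA(H) of self-adjoint operators on H = C^n. *)
Record SAmx (n : nat) := SAmk { sa_val :> 'M[C]_n; sa_herm : hermitian sa_val }.

Section SA.
Variable n : nat.
HB.instance Definition _ := [isSub for @sa_val n].
HB.instance Definition _ := [Equality of SAmx n by <:].
HB.instance Definition _ := [Choice of SAmx n by <:].

Lemma herm0 : hermitian (0 : 'M[C]_n).
Proof. by rewrite /hermitian adjmx0. Qed.
Lemma hermD (A B : SAmx n) : hermitian (sa_val A + sa_val B).
Proof. by rewrite /hermitian adjmxD (eqP (sa_herm A)) (eqP (sa_herm B)). Qed.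
Lemma hermN (A : SAmx n) : hermitian (- sa_val A).
Proof. by rewrite /hermitian adjmxN (eqP (sa_herm A)). Qed.
Lemma hermZ r (A : SAmx n) : hermitian (rC r *: sa_val A).
Proof. by rewrite /hermitian adjmxZr (eqP (sa_herm A)). Qed.

Definition sa0 := SAmk herm0.
Definition saD A B := SAmk (hermD A B).
Definition saN A := SAmk (hermN A).
Definition saZ r A := SAmk (hermZ r A).

Lemma saDA : associative saD.
Proof. by move=> a b c; apply: val_inj; rewrite /= addrA. Qed.
Lemma saDC : commutative saD.
Proof. by move=> a b; apply: val_inj; rewrite /= addrC. Qed.
Lemma sa0D : left_id sa0 saD.
Proof. by move=> a; apply: val_inj; rewrite /= add0r. Qed.
Lemma saND : left_inverse sa0 saN saD.
Proof. by move=> a; apply: val_inj; rewrite /= addNr. Qed.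

HB.instance Definition _ := GRing.isZmodule.Build (SAmx n) saDA saDC sa0D saND.

Lemma saZA a b v : saZ a (saZ b v) = saZ (a * b) v.
Proof.
by apply: val_inj; rewrite /= scalerA rmorphM.
Qed.
Lemma saZ1 : left_id 1 saZ.
Proof. by move=> v; apply: val_inj; rewrite /= rmorph1 scale1r. Qed.
Lemma saZDr : right_distributive saZ +%R.
Proof. by move=> a u v; apply: val_inj; rewrite /= scalerDr. Qed.
Lemma saZDl v : {morph saZ^~ v : a b / a + b}.
Proof.
by move=> a b; apply: val_inj; rewrite /= rmorphD scalerDl.
Qed.

HB.instance Definition _ := GRing.Zmodule_isLmodule.Build R (SAmx n) saZA saZ1 saZDr saZDl.
End SA.

(** SA on morphisms: A |-> Cm A Cm^dagger *)
Lemma herm_conj m n (Cm : 'M[C]_(m, n)) (A : SAmx n) :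
  hermitian (Cm *m sa_val A *m adjmx Cm).
Proof.
by rewrite /hermitian !adjmxM adjmxK (eqP (sa_herm A)) mulmxA.
Qed.
Definition saMap m n (Cm : 'M[C]_(m, n)) (A : SAmx n) : SAmx m :=
  SAmk (herm_conj Cm A).

(* R_{>=0}-linear maps out of Pos(H) = {A | posmx A} (as functions on matrices,
   only their values on Pos(H) matter) *)
Definition nnlin_on n (W : lmodType R) (f : 'M[C]_n -> W) : Prop :=
  f 0 = 0 /\
  (forall A B, posmx A -> posmx B -> f (A + B) = f A + f B) /\
  (forall r A, 0 <= r -> posmx A -> f (rC r *: A) = r *: f A).

Definition rlin (V W : lmodType R) (g : V -> W) : Prop :=
  (forall u v, g (u + v) = g u + g v) /\ (forall r u, g (r *: u) = r *: g u).

Definition rlin_SA n (W : lmodType C) (f : SAmx n -> W) : Prop :=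
  (forall S T, f (S + T) = f S + f T) /\ (forall r S, f (r *: S) = rC r *: f S).

Definition clin (V W : lmodType C) (g : V -> W) : Prop :=
  (forall u v, g (u + v) = g u + g v) /\ (forall c u, g (c *: u) = c *: g u).

(** (V, eta) is a universal arrow from Pos(C^n) to the forgetful functor
    Vect_R -> Mod_{R>=0}, i.e. V = R(Pos(H)) with unit eta of a left adjoint R. *)
Definition PosUniversal n (V : lmodType R) (eta : 'M[C]_n -> V) : Prop :=
  nnlin_on eta /\
  forall (W : lmodType R) (f : 'M[C]_n -> W), nnlin_on f ->
    (exists g : V -> W, rlin g /\ forall A, posmx A -> g (eta A) = f A) /\
    (forall g1 g2 : V -> W, rlin g1 -> rlin g2 ->
       (forall A, posmx A -> g1 (eta A) = g2 (eta A)) -> g1 =1 g2).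

(** (V, eta) is a universal arrow from SA(C^n) to the forgetful functor
    Vect_C -> Vect_R, i.e. V = C(SA(H)) with unit eta of a left adjoint C. *)
Definition SAUniversal n (V : lmodType C) (eta : SAmx n -> V) : Prop :=
  rlin_SA eta /\
  forall (W : lmodType C) (f : SAmx n -> W), rlin_SA f ->
    (exists g : V -> W, clin g /\ forall S, g (eta S) = f S) /\
    (forall g1 g2 : V -> W, clin g1 -> clin g2 ->
       (forall S, g1 (eta S) = g2 (eta S)) -> g1 =1 g2).

End Defs.

From Pilot Require Import Defs.
From HB Require Import structures.
From mathcomp Require Import all_boot all_order all_algebra.
From mathcomp Require Import reals complex ring.
Set Implicit Arguments. Unset Strict Implicit. Unset Printing Implicit Defensive.
Import Order.TTheory GRing.Theory Num.Theory.
Local Open Scope ring_scope.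

(* Every self-adjoint S is a difference of positive operators,
   S = 1/2 (S + 1)^2 - 1/2 (S^2 + 1), and every operator M is
   Re M + i Im M with Re M = 1/2 (M + M^dagger) and Im M = i/2 (M^dagger - M)
   self-adjoint.  Hence S |-> eta (1/2 (S + 1)^2) - eta (1/2 (S^2 + 1)) and
   M |-> eta (Re M) + i eta (Im M) are linear (additivity of eta on positives
   makes the first independent of the decomposition) and invert the two
   transposes, by the uniqueness part of the universal properties.  The same
   uniqueness gives naturality. *)

Section Transposes.
Variable R : realType.
Local Notation C := R[i].
Local Notation rC := (real_complex R).

Lemma rC_half : rC 2^-1 = 2^-1.
Proof. by rewrite fmorphV rmorph_nat. Qed.

Lemma mulCii (x : C) : 'i * ('i * x) = - x.
Proof. by rewrite mulrA -expr2 sqrCi mulN1r. Qed.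

Lemma adjmxZ m n (c : C) (A : 'M[C]_(m, n)) : adjmx (c *: A) = c^* *: adjmx A.
Proof. by apply/matrixP => i j; rewrite /adjmx !mxE rmorphM. Qed.

Lemma adjmx1 n : adjmx (1%:M : 'M[C]_n) = 1%:M.
Proof. by apply/matrixP => i j; rewrite /adjmx !mxE eq_sym rmorph_nat. Qed.

Lemma rlin_comp (U V W : lmodType R) (f : V -> W) (g : U -> V) :
  rlin f -> rlin g -> rlin (f \o g).
Proof. by case=> fD fZ [gD gZ]; split=> [u v|r u]; rewrite /= ?gD ?fD ?gZ ?fZ. Qed.

Lemma clin_comp (U V W : lmodType C) (f : V -> W) (g : U -> V) :
  clin f -> clin g -> clin (f \o g).
Proof. by case=> fD fZ [gD gZ]; split=> [u v|c u]; rewrite /= ?gD ?fD ?gZ ?fZ. Qed.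

Lemma rlinN (V W : lmodType R) (g : V -> W) v : rlin g -> g (- v) = - g v.
Proof. by case=> _ gZ; rewrite -scaleN1r gZ scaleN1r. Qed.

(* In [PosUniversal] and [SAUniversal] uniqueness is stated under an arbitrary
   [f]; instantiating [f] with the zero map extracts it. *)
Lemma PosUniversal_eq n (V : lmodType R) (eta : 'M[C]_n -> V) :
  PosUniversal eta ->
  forall (W : lmodType R) (g1 g2 : V -> W), rlin g1 -> rlin g2 ->
    (forall A, posmx A -> g1 (eta A) = g2 (eta A)) -> g1 =1 g2.
Proof.
case=> _ univ W; have nnlin0 : nnlin_on (fun _ : 'M[C]_n => 0 : W).
  by split=> //; split=> *; rewrite ?addr0 ?scaler0.
exact: (univ W _ nnlin0).2.
Qed.

Lemma SAUniversal_eq n (V : lmodType C) (eta : SAmx R n -> V) :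
  SAUniversal eta ->
  forall (W : lmodType C) (g1 g2 : V -> W), clin g1 -> clin g2 ->
    (forall S, g1 (eta S) = g2 (eta S)) -> g1 =1 g2.
Proof.
case=> _ univ W; have rlin0 : rlin_SA (fun _ : SAmx R n => 0 : W).
  by split=> *; rewrite ?addr0 ?scaler0.
exact: (univ W _ rlin0).2.
Qed.

Lemma adjmx_mul_ge0 k (y : 'cV[C]_k) : 0 <= (adjmx y *m y) 0 0.
Proof.
rewrite mxE; apply: sumr_ge0 => j _; rewrite /adjmx !mxE mulrC.
exact: mul_conjC_ge0.
Qed.

Lemma posmx_adjmxM m n (M : 'M[C]_(m, n)) : posmx (adjmx M *m M).
Proof.
move=> x; rewrite (_ : _ *m x = adjmx (M *m x) *m (M *m x)).
  exact: adjmx_mul_ge0.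
by rewrite adjmxM !mulmxA.
Qed.

Lemma posmx0 n : posmx (0 : 'M[C]_n).
Proof. by move=> x; rewrite mulmx0 mul0mx mxE. Qed.

Lemma posmx1 n : posmx (1%:M : 'M[C]_n).
Proof. by move=> x; rewrite mulmx1; apply: adjmx_mul_ge0. Qed.

Lemma posmxD n (A B : 'M[C]_n) : posmx A -> posmx B -> posmx (A + B).
Proof. by move=> hA hB x; rewrite mulmxDr mulmxDl mxE addr_ge0. Qed.

Lemma posmxZ n r (A : 'M[C]_n) : 0 <= r -> posmx A -> posmx (rC r *: A).
Proof.
move=> r_ge0 hA x; rewrite -scalemxAr -scalemxAl mxE mulr_ge0 //.
by rewrite ler0c.
Qed.

Lemma posmx_conj m n (Cm : 'M[C]_(m, n)) (A : 'M[C]_n) :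
  posmx A -> posmx (Cm *m A *m adjmx Cm).
Proof.
move=> hA x; rewrite (_ : _ *m x = adjmx (adjmx Cm *m x) *m A *m (adjmx Cm *m x)).
  exact: hA.
by rewrite adjmxM adjmxK !mulmxA.
Qed.

Lemma nnlin_on_subr n (W : lmodType R) (f : 'M[C]_n -> W) (P Q P' Q' : 'M[C]_n) :
  nnlin_on f -> posmx P -> posmx Q -> posmx P' -> posmx Q' ->
  P - Q = P' - Q' -> f P - f Q = f P' - f Q'.
Proof.
case=> _ [fD _] hP hQ hP' hQ' eqPQ.
have eqPQ' : P + Q' = P' + Q by rewrite -[P](subrK Q) eqPQ addrAC subrK.
have fPQ' : f P + f Q' = f P' + f Q by rewrite -!fD // eqPQ'.
by apply/eqP; rewrite subr_eq addrAC -fPQ' addrK.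
Qed.

Definition pos_hi n (S : 'M[C]_n) := rC 2^-1 *: ((S + 1%:M) *m (S + 1%:M)).
Definition pos_lo n (S : 'M[C]_n) := rC 2^-1 *: (S *m S + 1%:M).

Lemma pos_hi_lo_posmx n (S : SAmx R n) : posmx (pos_hi S) /\ posmx (pos_lo S).
Proof.
have hS := eqP (sa_herm S); have half_ge0 : 0 <= 2^-1 :> R by rewrite invr_ge0.
split; apply: posmxZ => //.
  have hS1 : adjmx (sa_val S + 1%:M) = sa_val S + 1%:M by rewrite adjmxD adjmx1 hS.
  by rewrite -{1}hS1; apply: posmx_adjmxM.
by apply: posmxD; [rewrite -{1}hS; apply: posmx_adjmxM | apply: posmx1].
Qed.

Lemma pos_hi_subr_lo n (S : 'M[C]_n) : pos_hi S - pos_lo S = S.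
Proof.
rewrite /pos_hi /pos_lo -scalerBr mulmxDl !mulmxDr mulmx1 !mul1mx.
have -> : S *m S + S + (S + 1%:M) - (S *m S + 1%:M) = S + S.
  by apply/eqP; rewrite subr_eq; apply/eqP; rewrite [RHS]addrACA (addrC S (S *m S)).
by rewrite -mulr2n -scaler_nat scalerA rC_half mulVf ?scale1r ?pnatr_eq0.
Qed.

Section PosToSA.
Variables (n : nat) (V : lmodType R) (eta : 'M[C]_n -> V).
Hypothesis eta_nnlin : nnlin_on eta.

Definition sa_of_pos (S : SAmx R n) : V := eta (pos_hi S) - eta (pos_lo S).

Lemma sa_of_posE (S : SAmx R n) P Q : posmx P -> posmx Q ->
  sa_val S = P - Q -> sa_of_pos S = eta P - eta Q.
Proof.
move=> hP hQ eqS; have [hhi hlo] := pos_hi_lo_posmx S.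
by apply: nnlin_on_subr => //; rewrite pos_hi_subr_lo.
Qed.

Lemma sa_of_pos_rlin : rlin sa_of_pos.
Proof.
have [_ [etaD etaZ]] := eta_nnlin.
split=> [S T|r S].
  have [hiS loS] := pos_hi_lo_posmx S; have [hiT loT] := pos_hi_lo_posmx T.
  rewrite (@sa_of_posE _ (pos_hi S + pos_hi T) (pos_lo S + pos_lo T));
    try exact: posmxD.
    by rewrite !etaD // /sa_of_pos opprD addrACA.
  by rewrite /= opprD addrACA !pos_hi_subr_lo.
have [hi lo] := pos_hi_lo_posmx S.
have [r_ge0|r_lt0] := leP 0 r.
  rewrite (@sa_of_posE _ (rC r *: pos_hi S) (rC r *: pos_lo S)); try exact: posmxZ.
    by rewrite !(etaZ r) // /sa_of_pos -scalerBr.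
  by rewrite /= -scalerBr pos_hi_subr_lo.
have Nr_ge0 : 0 <= - r by rewrite oppr_ge0 ltW.
rewrite (@sa_of_posE _ (rC (- r) *: pos_lo S) (rC (- r) *: pos_hi S));
  try exact: posmxZ.
  by rewrite !(etaZ (- r)) // /sa_of_pos -scalerBr scaleNr -scalerN opprB.
by rewrite /= -scalerBr rmorphN scaleNr -scalerN opprB pos_hi_subr_lo.
Qed.

End PosToSA.

Lemma pos_transpose_bij n (V : lmodType R) (eta : 'M[C]_n -> V) :
  PosUniversal eta ->
  forall phi : V -> SAmx R n, rlin phi ->
    (forall A, posmx A -> sa_val (phi (eta A)) = A) -> bijective phi.
Proof.
move=> univ phi phi_lin phiE; have eta_nnlin := univ.1.
exists (sa_of_pos eta) => [v|S].
  apply: (PosUniversal_eq univ (rlin_comp (sa_of_pos_rlin eta_nnlin) phi_lin)) => //.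
  move=> A hA /=; rewrite (@sa_of_posE _ _ eta _ _ A 0) ?subr0 ?phiE //.
    by rewrite eta_nnlin.1 subr0.
  exact: posmx0.
have [hi lo] := pos_hi_lo_posmx S.
by apply: val_inj; rewrite /= phi_lin.1 rlinN //= !phiE // pos_hi_subr_lo.
Qed.

Lemma pos_transpose_natural n m (Cm : 'M[C]_(m, n))
    (Vn : lmodType R) (etan : 'M[C]_n -> Vn)
    (Vm : lmodType R) (etam : 'M[C]_m -> Vm) :
  PosUniversal etan ->
  forall (phin : Vn -> SAmx R n) (phim : Vm -> SAmx R m),
    rlin phin -> rlin phim ->
    (forall A, posmx A -> sa_val (phin (etan A)) = A) ->
    (forall A, posmx A -> sa_val (phim (etam A)) = A) ->
  forall h : Vn -> Vm, rlin h ->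
    (forall A, posmx A -> h (etan A) = etam (Cm *m A *m adjmx Cm)) ->
    forall v, phim (h v) = saMap Cm (phin v).
Proof.
move=> univ phin phim phin_lin phim_lin phinE phimE h h_lin hE.
have saMap_lin : rlin (saMap Cm \o phin).
  have [pD pZ] := phin_lin.
  split=> [u w|r u]; apply: val_inj; rewrite /= ?pD ?pZ /=.
    by rewrite mulmxDr mulmxDl.
  by rewrite -scalemxAr -scalemxAl.
apply: (PosUniversal_eq univ (rlin_comp phim_lin h_lin) saMap_lin) => A hA.
by apply: val_inj; rewrite /= hE // phimE ?phinE //; apply: posmx_conj.
Qed.

Section Cartesian.
Variable n : nat.

Definition mxRe (M : 'M[C]_n) := rC 2^-1 *: (M + adjmx M).
Definition mxIm (M : 'M[C]_n) := rC 2^-1 *: ('i *: (adjmx M - M)).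

Lemma mxRe_herm (M : 'M[C]_n) : Defs.hermitian (mxRe M).
Proof. by rewrite /Defs.hermitian /mxRe adjmxZr adjmxD adjmxK addrC. Qed.

Lemma mxIm_herm (M : 'M[C]_n) : Defs.hermitian (mxIm M).
Proof.
rewrite /Defs.hermitian /mxIm adjmxZr adjmxZ adjmxD adjmxN adjmxK conjCi.
by rewrite scaleNr -scalerN opprB.
Qed.

Definition saRe M : SAmx R n := SAmk (mxRe_herm M).
Definition saIm M : SAmx R n := SAmk (mxIm_herm M).

Lemma mxRe_Im M : mxRe M + 'i *: mxIm M = M.
Proof.
by apply/matrixP => i j; rewrite /mxRe /mxIm !mxE rC_half mulrCA mulCii; field.
Qed.

Lemma saReD M N : saRe (M + N) = saRe M + saRe N.
Proof. by apply: val_inj; rewrite /= /mxRe adjmxD -scalerDr addrACA. Qed.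

Lemma saImD M N : saIm (M + N) = saIm M + saIm N.
Proof.
by apply: val_inj; rewrite /= /mxIm adjmxD -!scalerDr opprD addrACA.
Qed.

Lemma saReZ r M : saRe (rC r *: M) = r *: saRe M.
Proof. by apply: val_inj; rewrite /= /mxRe adjmxZr -scalerDr !scalerA mulrC. Qed.

Lemma saImZ r M : saIm (rC r *: M) = r *: saIm M.
Proof.
by apply: val_inj; rewrite /= /mxIm adjmxZr -scalerBr !scalerA; congr (_ *: _); ring.
Qed.

Lemma saReZi M : saRe ('i *: M) = - saIm M.
Proof.
apply: val_inj; rewrite /= /mxRe /mxIm adjmxZ conjCi.
by apply/matrixP => i j; rewrite !mxE; ring.
Qed.

Lemma saImZi M : saIm ('i *: M) = saRe M.
Proof.
apply: val_inj; rewrite /= /mxIm /mxRe adjmxZ conjCi.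
apply/matrixP => i j; rewrite !mxE.
rewrite (_ : 'i * _ = - ('i * ('i * ((M j i)^* + M i j)))); last by ring.
by rewrite mulCii opprK addrC.
Qed.

Lemma saRe_sa (S : SAmx R n) : saRe S = S.
Proof.
apply: val_inj; rewrite /= /mxRe (eqP (sa_herm S)) rC_half.
by apply/matrixP => i j; rewrite !mxE; field.
Qed.

Lemma saIm_sa (S : SAmx R n) : saIm S = 0.
Proof. by apply: val_inj; rewrite /= /mxIm (eqP (sa_herm S)) subrr !scaler0. Qed.

Section SAToB.
Variables (V : lmodType C) (eta : SAmx R n -> V).
Hypothesis eta_lin : rlin_SA eta.

Definition mx_of_sa (M : 'M[C]_n) : V := eta (saRe M) + 'i *: eta (saIm M).

Lemma mx_of_sa_clin : clin mx_of_sa.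
Proof.
have [etaD etaZ] := eta_lin.
have etaN (S : SAmx R n) : eta (- S) = - eta S.
  by rewrite -(scaleN1r S) etaZ rmorphN1 scaleN1r.
have mx_of_saD M N : mx_of_sa (M + N) = mx_of_sa M + mx_of_sa N.
  by rewrite /mx_of_sa saReD saImD !etaD scalerDr addrACA.
have mx_of_saZr r M : mx_of_sa (rC r *: M) = rC r *: mx_of_sa M.
  by rewrite /mx_of_sa saReZ saImZ !etaZ scalerDr !scalerA mulrC.
have mx_of_saZi M : mx_of_sa ('i *: M) = 'i *: mx_of_sa M.
  rewrite /mx_of_sa saReZi saImZi etaN scalerDr scalerA -expr2 sqrCi scaleN1r.
  by rewrite addrC.
split=> // c M.
by rewrite [c]complexE scalerDl -scalerA mx_of_saD mx_of_saZr mx_of_saZi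
  mx_of_saZr scalerDl scalerA.
Qed.

Lemma mx_of_sa_sa (S : SAmx R n) : mx_of_sa S = eta S.
Proof.
have eta0 : eta 0 = 0 by rewrite -(scale0r (0 : SAmx R n)) eta_lin.2 rmorph0 scale0r.
by rewrite /mx_of_sa saRe_sa saIm_sa eta0 scaler0 addr0.
Qed.

End SAToB.
End Cartesian.

Lemma sa_transpose_bij n (V : lmodType C) (eta : SAmx R n -> V) :
  SAUniversal eta ->
  forall psi : V -> 'M[C]_n, clin psi ->
    (forall S, psi (eta S) = sa_val S) -> bijective psi.
Proof.
move=> univ psi psi_lin psiE; have eta_lin := univ.1.
exists (mx_of_sa eta) => [v|M].
  apply: (SAUniversal_eq univ (clin_comp (mx_of_sa_clin eta_lin) psi_lin)) => //.
  by move=> S /=; rewrite psiE mx_of_sa_sa.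
by rewrite /mx_of_sa psi_lin.1 psi_lin.2 !psiE mxRe_Im.
Qed.

Lemma sa_transpose_natural n m (Cm : 'M[C]_(m, n))
    (Vn : lmodType C) (etan : SAmx R n -> Vn)
    (Vm : lmodType C) (etam : SAmx R m -> Vm) :
  SAUniversal etan ->
  forall (psin : Vn -> 'M[C]_n) (psim : Vm -> 'M[C]_m),
    clin psin -> clin psim ->
    (forall S, psin (etan S) = sa_val S) ->
    (forall S, psim (etam S) = sa_val S) ->
  forall h : Vn -> Vm, clin h ->
    (forall S, h (etan S) = etam (saMap Cm S)) ->
    forall v, psim (h v) = Cm *m psin v *m adjmx Cm.
Proof.
move=> univ psin psim psin_lin psim_lin psinE psimE h h_lin hE.
have conj_lin : clin (fun v => Cm *m psin v *m adjmx Cm).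
  have [pD pZ] := psin_lin.
  split=> [u w|c u]; rewrite ?pD ?pZ; first by rewrite mulmxDr mulmxDl.
  by rewrite -scalemxAr -scalemxAl.
apply: (SAUniversal_eq univ (clin_comp psim_lin h_lin) conj_lin) => S.
by rewrite /= hE psimE psinE.
Qed.

End Transposes.

Theorem theorem3p3 (R : realType) :
  (forall (n : nat) (V : lmodType R) (eta : 'M[R[i]]_n -> V),
     PosUniversal eta ->
     forall phi : V -> SAmx R n, rlin phi ->
       (forall A, posmx A -> sa_val (phi (eta A)) = A) ->
       bijective phi)
  /\
  (forall (n : nat) (V : lmodType R[i]) (eta : SAmx R n -> V),
     SAUniversal eta ->
     forall psi : V -> 'M[R[i]]_n, clin psi ->
       (forall S, psi (eta S) = sa_val S) ->
       bijective psi)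
  /\
  (forall (n m : nat) (Cm : 'M[R[i]]_(m, n))
          (Vn : lmodType R) (etan : 'M[R[i]]_n -> Vn)
          (Vm : lmodType R) (etam : 'M[R[i]]_m -> Vm),
     PosUniversal etan -> PosUniversal etam ->
     forall (phin : Vn -> SAmx R n) (phim : Vm -> SAmx R m),
       rlin phin -> (forall A, posmx A -> sa_val (phin (etan A)) = A) ->
       rlin phim -> (forall A, posmx A -> sa_val (phim (etam A)) = A) ->
     forall h : Vn -> Vm, rlin h ->
       (forall A, posmx A -> h (etan A) = etam (Cm *m A *m adjmx Cm)) ->
       forall v, phim (h v) = saMap Cm (phin v))
  /\
  (forall (n m : nat) (Cm : 'M[R[i]]_(m, n))
          (Vn : lmodType R[i]) (etan : SAmx R n -> Vn)
          (Vm : lmodType R[i]) (etam : SAmx R m -> Vm),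
     SAUniversal etan -> SAUniversal etam ->
     forall (psin : Vn -> 'M[R[i]]_n) (psim : Vm -> 'M[R[i]]_m),
       clin psin -> (forall S, psin (etan S) = sa_val S) ->
       clin psim -> (forall S, psim (etam S) = sa_val S) ->
     forall h : Vn -> Vm, clin h ->
       (forall S, h (etan S) = etam (saMap Cm S)) ->
       forall v, psim (h v) = Cm *m psin v *m adjmx Cm).
Proof.
split; first exact: pos_transpose_bij.
split; first exact: sa_transpose_bij.
split.
  move=> n m Cm Vn etan Vm etam univn _ phin phim phin_lin phinE phim_lin phimE.
  exact: pos_transpose_natural.
move=> n m Cm Vn etan Vm etam univn _ psin psim psin_lin psinE psim_lin psimE.
exact: sa_transpose_natural.
Qed.
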